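(* Let $S$ be a finite multiset of $m$ labeled points $(x,y)\in[0,1]\times\{-1,+1\}$ (a pool whose labels are hidden until queried), let $k\ge 0$ be an integer, and assume $\mathrm{err}(S,\mathcal{H}_{\dashv})\le k/m$. Consider the following procedure: query the labels of the points of $S$ in decreasing order of $x$ (from highest to lowest), stopping as soon as $k+1$ negative labels have been observed (or all points have been queried); then output a hypothesis $\hat h\in\mathcal{H}_{\dashv}$ that minimizes the error on the set of queried (now labeled) points. Then $\mathrm{err}(S,\hat h)=\mathrm{err}(S,\mathcal{H}_{\dashv})$, and the procedure queries at most $k+1$ points whose label is negative (auditing complexity $k+1$).
   Context: For $a\in[0,1]$, the threshold hypothesis $h_a:[0,1]\to\{-1,+1\}$ is $h_a(x)=+1$ if $x\ge a$ and $h_a(x)=-1$ otherwise; $\mathcal{H}_{\dashv}=\{h_a : a\in[0,1]\}$. For a multiset $S$ of labeled points, $\mathrm{err}(S,h)=\frac{1}{|S|}\sum_{(x,y)\in S}\mathbb{I}[h(x)\ne y]$ and $\mathrm{err}(S,\mathcal{H})=\min_{h\in\mathcal{H}}\mathrm{err}(S,h)$. The auditing complexity of a procedure is the number of queries it makes on points whose label is negative. *)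

From HB Require Import structures.
From mathcomp Require Import all_boot all_order all_algebra.
From mathcomp Require Import boolp classical_sets reals.
Set Implicit Arguments. Unset Strict Implicit. Unset Printing Implicit Defensive.
Import Order.TTheory GRing.Theory Num.Theory.
Local Open Scope ring_scope.
Local Open Scope classical_set_scope.

(* Labels: true = +1, false = -1.  A labeled point is (x, y) : R * bool.
   A finite multiset of labeled points is a seq (R * bool). *)

Definition thr (R : realType) (a : R) (x : R) : bool := a <= x.

Definition err (R : realType) (S : seq (R * bool)) (h : R -> bool) : R :=
  (count (fun p => h p.1 != p.2) S)%:R / (size S)%:R.

Definition errH (R : realType) (S : seq (R * bool)) : R :=
  inf [set err S (thr a) | a in [set a : R | 0 <= a <= 1]].

Fixpoint queried (R : realType) (k : nat) (s : seq (R * bool)) : seq (R * bool) :=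
  match s with
  | [::] => [::]
  | p :: s' =>
      if p.2 then p :: queried k s'
      else if k is k'.+1 then p :: queried k' s' else [:: p]
  end.

Definition nneg (R : realType) (s : seq (R * bool)) : nat := count (fun p => ~~ p.2) s.

From HB Require Import structures.
From mathcomp Require Import all_boot all_order all_algebra.
From mathcomp Require Import boolp classical_sets reals.
Import Order.TTheory GRing.Theory Num.Theory.
Set Implicit Arguments. Unset Strict Implicit. Unset Printing Implicit Defensive.
Local Open Scope ring_scope.

(* Write s for the pool sorted by decreasing x and P := queried k s. If P is
   not all of s, then P contains k+1 negatives and every point of s beyond P
   lies at or below t, the x-coordinate of the last point of P. A threshold
   b <= t misclassifies these k+1 negatives, hence cannot be optimal because
   some threshold makes at most k mistakes on S. A threshold b > t labels all
   points beyond P negative, so on such thresholds the mistake counts on s and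
   on P differ by a constant: a minimiser on P is then a minimiser on s. *)

Section Mistakes.
Variable R : realType.
Implicit Types (S P Q Rs : seq (R * bool)) (p q : R * bool) (b t : R).

Definition mistakes S b : nat := count (fun p => thr b p.1 != p.2) S.

Lemma mistakes_cat P Rs b : mistakes (P ++ Rs) b = (mistakes P b + mistakes Rs b)%N.
Proof. exact: count_cat. Qed.

Lemma nneg_le_mistakes P b : {in P, forall p, b <= p.1} -> (nneg P <= mistakes P b)%N.
Proof.
move=> Pb; rewrite /nneg (eq_in_count (a2 := fun p => ~~ p.2 && (thr b p.1 != p.2))).
  by apply: sub_count => p /andP[].
by move=> p /Pb bp; rewrite /thr bp; case: p.2.
Qed.

Lemma mistakes_above P b : {in P, forall p, p.1 < b} -> mistakes P b = count snd P.
Proof.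
move=> Pb; apply: eq_in_count => p /Pb pb.
by rewrite /thr leNgt pb; case: p.2.
Qed.

Variables (D : {pred R}) (k : nat).

Lemma min_mistakes_cat P Rs t a b0 :
  {in P, forall p, t <= p.1} -> {in Rs, forall q, q.1 <= t} ->
  (k.+1 <= nneg P)%N ->
  {in D, forall b, mistakes P a <= mistakes P b}%N ->
  b0 \in D -> (mistakes (P ++ Rs) b0 <= k)%N ->
  {in D, forall b, mistakes (P ++ Rs) a <= mistakes (P ++ Rs) b}%N.
Proof.
move=> Pt Rst negP amin Db0 b0k.
have below b : b <= t -> (k.+1 <= mistakes P b)%N.
  move=> bt; apply: leq_trans negP _; apply: nneg_le_mistakes => p /Pt.
  exact: le_trans.
have above b : t < b -> mistakes Rs b = count snd Rs.
  by move=> tb; apply: mistakes_above => q /Rst qt; apply: le_lt_trans tb.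
have b0P : (mistakes P b0 <= k)%N.
  by apply: leq_trans b0k; rewrite mistakes_cat leq_addr.
have tb0 : t < b0.
  by rewrite ltNge; apply: contraTN b0P => /below; rewrite -ltnNge.
have ta : t < a.
  by rewrite ltNge; apply: contraTN b0P => /below /leq_trans/(_ (amin _ Db0)); rewrite -ltnNge.
have ak : (mistakes (P ++ Rs) a <= k)%N.
  by apply: leq_trans b0k; rewrite !mistakes_cat !above // leq_add2r amin.
move=> b Db; case: (leP b t) => [bt | tb].
  apply: leq_trans ak (leq_trans (leqnSn k) (leq_trans (below b bt) _)).
  by rewrite mistakes_cat leq_addr.
by rewrite !mistakes_cat !above // leq_add2r amin.
Qed.

End Mistakes.

Lemma sorted_rcons_cat_split (T : eqType) (r : rel T) Q (p : T) Rs :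
  transitive r -> reflexive r -> sorted r (rcons Q p ++ Rs) ->
  {in rcons Q p, forall q, r q p} /\ {in Rs, forall q, r p q}.
Proof.
move=> r_tr r_refl; rewrite (sorted_pairwise r_tr) pairwise_cat.
case/and3P=> /allrelP pRs Qp _; split=> [q|q qRs]; last first.
  by apply: pRs; rewrite ?mem_rcons ?mem_head.
rewrite mem_rcons inE => /predU1P[-> // | qQ].
move: Qp; rewrite -cats1 pairwise_cat => /and3P[/allrelP Qp _ _].
by apply: Qp; rewrite ?mem_head.
Qed.

Section Queried.
Variable R : realType.
Implicit Types (s : seq (R * bool)) (k : nat).

Lemma prefix_queried k s : prefix (queried k s) s.
Proof.
elim: s k => [|p s IH] k //=.
by case: p => x [] /=; case: k => [|k]; rewrite eqxx ?prefix0s ?IH.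
Qed.

Lemma nneg_queried k s : (nneg (queried k s) <= k.+1)%N.
Proof. by elim: s k => [|[x []] s IH] [|k] //=; apply: IH. Qed.

Lemma queried_eq_or_nneg k s : queried k s = s \/ nneg (queried k s) = k.+1.
Proof.
elim: s k => [|[x y] s IH] k /=; first by left.
case: y; first by case: (IH k) => [-> | ?]; [left | right].
case: k => [|k]; first by case: s {IH}; [left | right].
by case: (IH k) => [-> | nk]; [left | right; rewrite /nneg /= -/(nneg _) nk].
Qed.

End Queried.

Lemma queried_min_mistakes (R : realType) (D : {pred R}) k (s : seq (R * bool)) a :
  sorted (fun p q : R * bool => q.1 <= p.1) s ->
  {in D, forall b, mistakes (queried k s) a <= mistakes (queried k s) b}%N ->
  (exists2 b0, b0 \in D & mistakes s b0 <= k)%N ->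
  {in D, forall b, mistakes s a <= mistakes s b}%N.
Proof.
move=> s_sorted amin [b0 Db0 b0k].
have [qs | negP] := queried_eq_or_nneg k s; first by rewrite -qs.
have [Rs sE] := prefixP (prefix_queried k s).
case/lastP: (queried k s) negP sE amin => [// | Q p] negP sE amin.
have [Qp pRs] : {in rcons Q p, forall q, p.1 <= q.1} /\ {in Rs, forall q, q.1 <= p.1}.
  apply: (sorted_rcons_cat_split (r := fun p q : R * bool => q.1 <= p.1)).
  - by move=> y x z /= xy yz; apply: le_trans yz xy.
  - by move=> x /=.
  - by rewrite -sE.
rewrite sE in b0k *; apply: (min_mistakes_cat (t := p.1) Qp pRs _ amin Db0 b0k).
by rewrite negP.
Qed.

Section ThresholdError.
Variable R : realType.
Implicit Types (S : seq (R * bool)) (a b : R).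

Lemma err_thrE S b : err S (thr b) = (mistakes S b)%:R / (size S)%:R.
Proof. by []. Qed.

Lemma errH_le_err S b : b \in `[0, 1] -> errH S <= err S (thr b).
Proof.
move=> b01; apply: ge_inf; last by exists b => //; rewrite in_itv in b01.
by exists 0 => _ [c _ <-]; rewrite err_thrE divr_ge0.
Qed.

Lemma le_errH S c : (forall b, b \in `[0, 1] -> c <= err S (thr b)) -> c <= errH S.
Proof.
move=> c_lb; apply: lb_le_inf.
  by exists (err S (thr 0)), 0 => //=; rewrite lexx ler01.
by move=> _ [b b01 <-]; apply: c_lb; rewrite in_itv.
Qed.

Lemma err_eq_errH S a : a \in `[0, 1] ->
  {in `[0, 1], forall b, (mistakes S a <= mistakes S b)%N} -> err S (thr a) = errH S.
Proof.
move=> a01 amin; apply/eqP; rewrite eq_le errH_le_err // andbT.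
apply: le_errH => b b01; rewrite !err_thrE.
by apply: ler_wpM2r; rewrite ?invr_ge0 // ler_nat amin.
Qed.

Lemma err_eq_errH_min S a :
  err S (thr a) = errH S -> {in `[0, 1], forall b, (mistakes S a <= mistakes S b)%N}.
Proof.
move=> aopt b b01; have [/size0nil -> // | Spos] := posnP (size S).
have := errH_le_err S b01; rewrite -aopt !err_thrE.
by rewrite ler_pM2r ?invr_gt0 ?ltr0n // ler_nat.
Qed.

Lemma errH_le_exists_mistakes S k : errH S <= k%:R / (size S)%:R ->
  exists2 b, b \in `[0, 1] & (mistakes S b <= k)%N.
Proof.
have [/size0nil -> _ | Spos] := posnP (size S).
  by exists 0; rewrite // in_itv /= lexx ler01.
apply: contraPP => /exists2P/forallNP few; apply/negP; rewrite -ltNge.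
apply: (@lt_le_trans _ _ (k.+1%:R / (size S)%:R)).
  by rewrite ltr_pM2r ?invr_gt0 ?ltr0n // ltr_nat.
apply: le_errH => b b01; rewrite err_thrE ler_pM2r ?invr_gt0 ?ltr0n // ler_nat.
by rewrite ltnNge; apply/negP => bk; apply: (few b).
Qed.

End ThresholdError.

Theorem lemma2 (R : realType) (S : seq (R * bool)) (k : nat)
  (HS01 : forall p, p \in S -> 0 <= p.1 <= 1)
  (Herr : errH S <= k%:R / (size S)%:R)
  (s : seq (R * bool))
  (Hperm : perm_eq s S)
  (Hsorted : sorted (fun p q : R * bool => q.1 <= p.1) s)
  (a : R) (Ha01 : 0 <= a <= 1)
  (Hmin : err (queried k s) (thr a) = errH (queried k s)) :
  err S (thr a) = errH S /\ (nneg (queried k s) <= k.+1)%N.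
Proof.
split; last exact: nneg_queried.
have mistakesS b : mistakes S b = mistakes s b by rewrite /mistakes (permP Hperm).
apply: err_eq_errH; first by rewrite in_itv.
move=> b b01; rewrite !mistakesS.
have [b0 b0_01 b0k] := errH_le_exists_mistakes Herr.
apply: (queried_min_mistakes Hsorted (err_eq_errH_min Hmin) _ b01).
by exists b0; rewrite // -mistakesS.
Qed.
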